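(* Let $Y$ be a geodesic space, $D\subseteq Y$, $S$ a semigroup of nonexpansive maps $D\to D$ endowed with the Borel $\sigma$-algebra of the compact-open topology, $(X,\mu)$ a probability space, $T:X\to X$ an ergodic measure-preserving transformation, $w:X\to S$ measurable, and $a_n(x)=w(x)w(Tx)\cdots w(T^{n-1}x)$ ($a_0$ the identity). Fix $y\in D$ with $\int_X d(y,a_1(x)y)\,d\mu(x)<\infty$ and let $A=\lim_{n\to\infty}\frac1n\int_X d(y,a_n(x)y)\,d\mu(x)$. Write $D_n(x)=d(y,a_n(x)y)$ and $D_n(x,k)=d(y,a_{n-k}(T^kx)y)$ for $0\le k\le n$. Let $E$ be the set of $x\in X$ such that for every $\varepsilon>0$ there exist $M\in\mathbb{N}$ and infinitely many $n\in\mathbb{N}$ with $D_n(x)-D_n(x,k)\ge(A-\varepsilon)k$ for all integers $k\in[M,n]$. Let $x\in E$ with $\lim_{n\to\infty}D_n(x)/n=A>0$. Then for all sequences $(\alpha_i)\subseteq(0,1]$ and $(p_i)\subseteq\mathbb{N}$ there exist sequences $(K_i),(n_i)\subseteq\mathbb{N}$ such that for all $i\ge1$: (i) $p_i\le K_i$, $n_i\in(K_{i+1},n_{i+1})$, and $D_{n_{i+1}}(x)\ge\max\{D_{n_i}(x),An_i\}$; (ii) for all integers $k\in[K_i,n_i]$, $|D_k(x)-Ak|\le Ak/2^i$ and \[(1-\min\{1/2^i,\alpha_i\})D_k(x)+d(a_k(x)y,a_{n_i}(x)y)\le D_{n_i}(x).\]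
   Context: A geodesic space is a metric space in which any two points are joined by a distance-preserving path from a real interval. A map is nonexpansive if it is $1$-Lipschitz. *)

From HB Require Import structures.
From mathcomp Require Import all_boot all_order all_algebra.
From mathcomp Require Import all_classical all_reals all_analysis.
Set Implicit Arguments. Unset Strict Implicit. Unset Printing Implicit Defensive.
Import Order.TTheory GRing.Theory Num.Theory.
Local Open Scope classical_set_scope.
Local Open Scope ring_scope.

Definition geodesic_space (R : realType) (Y : metricType R) : Prop :=
  forall u v : Y, exists g : R -> Y,
    g 0 = u /\ g (mdist u v) = v /\
    forall s t, 0 <= s <= mdist u v -> 0 <= t <= mdist u v ->
      mdist (g s) (g t) = `|s - t|.

Definition nonexpansive (R : realType) (Y : metricType R) (D : set Y)
  (f : D -> D) : Prop :=
  forall u v : D, mdist (set_val (f u)) (set_val (f v)) <= mdist (set_val u) (set_val v).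

Definition semigroup_of_maps (T : Type) (S : set (T -> T)) : Prop :=
  forall f g, S f -> S g -> S (f \o g).

Definition borel_measurable_fun d (X : measurableType d) (V : topologicalType)
  (f : X -> V) : Prop :=
  forall B : set V, <<s open >> B -> measurable (f @^-1` B).

Definition measure_preserving d (X : measurableType d) (R : realType)
  (mu : {measure set X -> \bar R}) (T : X -> X) : Prop :=
  measurable_fun setT T /\
  forall A : set X, measurable A -> mu (T @^-1` A) = mu A.

Definition ergodic d (X : measurableType d) (R : realType)
  (mu : {measure set X -> \bar R}) (T : X -> X) : Prop :=
  measure_preserving mu T /\
  forall A : set X, measurable A -> T @^-1` A = A -> mu A = 0%E \/ mu A = 1%E.

Fixpoint cocycle (X U : Type) (T : X -> X) (w : X -> U -> U) (n : nat) (x : X) : U -> U :=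
  match n with
  | 0 => id
  | n'.+1 => w x \o cocycle T w n' (T x)
  end.

From HB Require Import structures.
From mathcomp Require Import all_boot all_order all_algebra.
From mathcomp Require Import all_classical all_reals all_analysis.
From mathcomp Require Import lra.
Import Order.TTheory GRing.Theory Num.Theory.
Import numFieldTopology.Exports numFieldNormedType.Exports.
Local Open Scope classical_set_scope.
Local Open Scope ring_scope.

(* Write c_i = min(2^-i, alpha_i) and eps_i = A c_i / 2. Since D_k(x) / k -> A,
   |D_k(x) - A k| <= eps_i k for k large; since x is in E, there are
   arbitrarily large n with D_n(x) - D_n(x,k) >= (A - eps_i) k for all large
   k <= n, and since D_n(x) -> oo such n can also be taken with D_n(x) above
   any prescribed bound. This lets one choose n_1 < n_2 < ... inductively.
   By the cocycle identity a_n(x) = a_k(x) a_(n-k)(T^k x) and nonexpansiveness,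
   d(a_k(x) y, a_n(x) y) <= D_n(x,k), and (ii) follows from an elementary
   inequality. Only x in E and the convergence of D_n(x) / n are used. *)

Lemma cocycleD (X U : Type) (T : X -> X) (w : X -> U -> U) k m z u :
  cocycle T w (k + m) z u = cocycle T w k z (cocycle T w m (iter k T z) u).
Proof. by elim: k z => [//|k IH] z /=; rewrite IH -iterSr. Qed.

Lemma cocycle_nonexpansive (R : realType) (Y : metricType R) (D : set Y)
    (X : Type) (T : X -> X) (w : X -> D -> D) :
  (forall z, nonexpansive (w z)) -> forall n z, nonexpansive (cocycle T w n z).
Proof.
move=> w_ne; elim=> [|n IH] z u v //=.
exact: le_trans (w_ne _ _ _) (IH _ _ _).
Qed.

Lemma dist_cocycle_le (R : realType) (Y : metricType R) (D : set Y)
    (X : Type) (T : X -> X) (w : X -> D -> D) (y : D) k n z :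
  (forall z, nonexpansive (w z)) -> (k <= n)%N ->
  mdist (set_val (cocycle T w k z y)) (set_val (cocycle T w n z y))
    <= mdist (set_val y) (set_val (cocycle T w (n - k) (iter k T z) y)).
Proof.
move=> w_ne kn; rewrite -[in cocycle T w n z y](subnKC kn) cocycleD.
exact: cocycle_nonexpansive.
Qed.

Lemma nat_dependent_choice {V : Type} {P : nat -> V -> V -> Prop} (v0 : V) :
  (forall i v, exists v', P i v v') -> exists u : nat -> V, forall i, P i (u i) (u i.+1).
Proof.
move=> hP; have [f hf] : {f : nat -> V -> V & forall i v, P i v (f i v)}.
  apply: (choice (P := fun i (g : V -> V) => forall v, P i v (g v))) => i.
  by have [g hg] := choice (hP i); exists g.
by exists (fix u i := if i is j.+1 then f j (u j) else v0) => i; exact: hf.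
Qed.

(* With [a, b, g] standing for D_k(x), D_n(x), D_n(x,k): since
   (1 - c)(1 + c/2) <= 1 - c/2, the gap [(A - A c / 2) k] absorbs the error of
   the linear approximation of [a]. *)
Lemma near_linear_gap_le (R : realFieldType) (A c kr a b g : R) :
  0 <= A -> c <= 1 -> 0 <= kr ->
  `|a - A * kr| <= A * c / 2 * kr -> (A - A * c / 2) * kr <= b - g ->
  (1 - c) * a + g <= b.
Proof.
move=> A_ge0 c_le1 kr_ge0; rewrite ler_norml => /andP[_ a_le] gap.
have Akr_ge0 : 0 <= A * kr by exact: mulr_ge0.
have : (1 - c) * a <= (1 - c) * (A * kr + A * c / 2 * kr).
  by apply: ler_wpM2l; lra.
nra.
Qed.

Section LinearGrowth.
Variables (R : realType) (f : nat -> R) (A : R).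
Hypothesis f_cvg : (fun n => f n / n%:R) @ \oo --> A.

Lemma near_linear_eventually eps : 0 < eps ->
  exists N, forall k, (N <= k)%N -> `|f k - A * k%:R| <= eps * k%:R.
Proof.
move=> eps_gt0; have [N _ fN] := cvgr_dist_le _ _ f_cvg _ eps_gt0.
exists N.+1 => k Nk; have k_gt0 : 0 < k%:R :> R by rewrite ltr0n (leq_trans _ Nk).
rewrite -[f k](divfK (lt0r_neq0 k_gt0)) -mulrBl normrM (gtr0_norm k_gt0) distrC.
by rewrite ler_pM2r // fN //=; exact: ltnW.
Qed.

Hypothesis A_gt0 : 0 < A.

Lemma linear_growth_unbounded m : exists N, forall n, (N <= n)%N -> m <= f n.
Proof.
have [|N fN] := near_linear_eventually (A / 2); first exact: divr_gt0.
have bound_ge0 : 0 <= 2 * `|m| / A by rewrite divr_ge0 ?mulr_ge0 // ltW.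
exists (maxn N (Num.bound (2 * `|m| / A))) => n; rewrite geq_max => /andP[Nn bn].
have m_lt : 2 * `|m| / A < n%:R.
  by apply: lt_le_trans (archi_boundP bound_ge0) _; rewrite ler_nat.
have := fN n Nn; rewrite ler_norml => /andP[fn_ge _].
have : 2 * `|m| < A * n%:R by rewrite -ltr_pdivrMl // mulrC.
have := ler_norm m; nra.
Qed.

Variable g : nat -> nat -> R.
Hypothesis f_gap : forall eps : R, 0 < eps -> exists M : nat, forall N : nat,
  exists2 n : nat, (N <= n)%N &
  forall k : nat, (M <= k <= n)%N -> (A - eps) * k%:R <= f n - g n k.

Lemma gap_times_unbounded eps : 0 < eps -> exists M, forall m N : nat, exists n,
  [/\ (m < n)%N, (N < n)%N, Num.max (f m) (A * m%:R) <= f n &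
      forall k, (M <= k <= n)%N -> (A - eps) * k%:R <= f n - g n k].
Proof.
move=> /f_gap[M gap]; exists M => m N.
have [N0 f_large] := linear_growth_unbounded (Num.max (f m) (A * m%:R)).
have [n] := gap (maxn N0 (maxn m.+1 N.+1)).
by rewrite !geq_max => /and3P[N0n mn Nn] gap_n; exists n; split => //; exact: f_large.
Qed.

Variables (alpha : nat -> R) (p : nat -> nat).
Hypothesis alpha_in : forall i, 0 < alpha i <= 1.

Lemma good_times_exist : exists K n : nat -> nat, forall i : nat, (1 <= i)%N ->
  [/\ (p i <= K i)%N, (K i.+1 < n i < n i.+1)%N,
      Num.max (f (n i)) (A * (n i)%:R) <= f (n i.+1) &
      forall k : nat, (K i <= k <= n i)%N ->
        `|f k - A * k%:R| <= A * k%:R / 2 ^+ i /\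
        (1 - Num.min (2 ^+ i)^-1 (alpha i)) * f k + g (n i) k <= f (n i)].
Proof.
pose c i := Num.min ((2 : R) ^+ i)^-1 (alpha i).
have c_gt0 i : 0 < c i by rewrite lt_min invr_gt0 exprn_gt0 //; case/andP: (alpha_in i).
have c_le1 i : c i <= 1 by rewrite ge_min; case/andP: (alpha_in i) => _ ->; rewrite orbT.
have c_le i : c i <= (2 ^+ i)^-1 by rewrite ge_min lexx.
pose eps i := A * c i / 2.
have eps_gt0 i : 0 < eps i by rewrite divr_gt0 ?mulr_gt0.
have [N N_near] := choice (fun i => near_linear_eventually _ (eps_gt0 i)).
have [M M_step] := choice (fun i => gap_times_unbounded _ (eps_gt0 i)).
pose K i := maxn (p i) (maxn (N i) (M i)).
have [n n_step] := nat_dependent_choice 0%N (fun j m => M_step j.+1 m (K j.+2)).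
exists K, n => -[//|j] _; set i := j.+1.
have [_ Kn _ gap] := n_step j; have [n_lt _ n_max _] := n_step i.
split => //; [exact: leq_maxl | by rewrite Kn | move=> k /andP[Kk kn]].
have [Nk Mk] : (N i <= k)%N /\ (M i <= k)%N.
  by move: Kk; rewrite !geq_max => /and3P[_ -> ->].
have near := N_near i k Nk; have gapk := gap k (introT andP (conj Mk kn)).
split; last exact: near_linear_gap_le (ltW A_gt0) (c_le1 i) (ler0n _ k) near gapk.
apply: le_trans near _; rewrite /eps.
have Ak_ge0 : 0 <= A * k%:R := mulr_ge0 (ltW A_gt0) (ler0n _ k).
have := ler_wpM2l Ak_ge0 (c_le i); have := mulr_ge0 Ak_ge0 (ltW (c_gt0 i)).
lra.
Qed.

End LinearGrowth.

Theorem lemma3p1 (R : realType) (Y : metricType R) (D : set Y)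
  (S : set {compact-open, D -> D})
  (d : measure_display) (X : measurableType d) (mu : probability X R)
  (T : X -> X) (w : X -> {compact-open, D -> D}) (y : D) (A : R) (x : X) :
  geodesic_space Y ->
  semigroup_of_maps S ->
  (forall f, S f -> nonexpansive f) ->
  ergodic mu T ->
  (forall z, S (w z)) ->
  borel_measurable_fun w ->
  let Dn := fun (n : nat) (z : X) =>
    mdist (set_val y) (set_val (cocycle T w n z y)) in
  let Dnk := fun (n k : nat) (z : X) =>
    mdist (set_val y) (set_val (cocycle T w (n - k) (iter k T z) y)) in
  (\int[mu]_z (Dn 1 z)%:E < +oo)%E ->
  (fun n : nat => ((n%:R)^-1)%:E * \int[mu]_z (Dn n z)%:E)%E @ \oo --> A%:E ->
  (* x belongs to E *)
  (forall eps : R, 0 < eps -> exists M : nat, forall N : nat, exists2 n : nat,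
     (N <= n)%N &
     forall k : nat, (M <= k <= n)%N -> (A - eps) * k%:R <= Dn n x - Dnk n k x) ->
  (fun n : nat => Dn n x / n%:R) @ \oo --> A ->
  0 < A ->
  forall (alpha : nat -> R) (p : nat -> nat),
    (forall i, 0 < alpha i <= 1) ->
    exists K n : nat -> nat, forall i : nat, (1 <= i)%N ->
      [/\ (p i <= K i)%N, (K i.+1 < n i < n i.+1)%N,
          Num.max (Dn (n i) x) (A * (n i)%:R) <= Dn (n i.+1) x &
          forall k : nat, (K i <= k <= n i)%N ->
            `|Dn k x - A * k%:R| <= A * k%:R / 2 ^+ i /\
            (1 - Num.min (2 ^+ i)^-1 (alpha i)) * Dn k x
              + mdist (set_val (cocycle T w k x y)) (set_val (cocycle T w (n i) x y))
              <= Dn (n i) x].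
Proof.
move=> _ _ maps_ne _ w_in_S _ Dn Dnk _ _ x_in_E Dn_cvg A_gt0 alpha p alpha_in.
have w_ne z : nonexpansive (w z) := maps_ne _ (w_in_S z).
have [K [n good]] := @good_times_exist _ (Dn^~ x) _ Dn_cvg A_gt0
  (fun n k => Dnk n k x) x_in_E alpha p alpha_in.
exists K, n => i i_ge1; have [pK Kn n_max good_k] := good i i_ge1.
split=> // k /andP[Kk kn]; have [near gap] := good_k k (introT andP (conj Kk kn)).
split=> //; apply: le_trans gap; rewrite lerD2l.
exact: (@dist_cocycle_le _ _ _ _ T w y k (n i) x w_ne kn).
Qed.
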